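(* Let $E,E_1,F,F_1$ be Banach spaces over $\mathbb{K}$, $m\in\mathbb{N}$, and let $R\in\mathcal{L}(E;F)$ and $B\in\mathcal{L}(E_1;F_1)$ be non-zero operators. Let $\mathcal{A}$ be an operator ideal and $(\mathcal{Q},\|\cdot\|_\mathcal{Q})$ a Banach polynomial ideal such that the bounded linear operator $S_{RB}\colon\mathcal{Q}(^mF_1;E)\to\mathcal{Q}(^mE_1;F)$, $S_{RB}(P)=R\circ P\circ B$, belongs to $\mathcal{A}$. Then: (a) $R\in\mathcal{A}(E;F)$; (b) if $(\mathcal{Q},\|\cdot\|_\mathcal{Q})$ contains the finite rank polynomials strongly, then $B\in\Delta^1_m\mathcal{A}(E_1;F_1)$, i.e. the operator $\Delta^1_mB\colon\mathcal{P}(^mF_1)\to\mathcal{P}(^mE_1)$, $q\mapsto q\circ B$, belongs to $\mathcal{A}(\mathcal{P}(^mF_1);\mathcal{P}(^mE_1))$.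
   Context: Banach spaces are over $\mathbb{K}=\mathbb{R}$ or $\mathbb{C}$; $\mathcal{P}(^jX;Y)$ is the Banach space of continuous $j$-homogeneous polynomials $X\to Y$ with sup norm, $\mathcal{P}(^jX)=\mathcal{P}(^jX;\mathbb{K})$, $\mathcal{L}(X;Y)$ the bounded linear operators. Operator ideals are in the sense of Pietsch. A polynomial of finite type is a finite linear combination of maps $x\mapsto\varphi(x)^jb$, $\varphi\in X^*$, $b\in Y$. A Banach polynomial ideal is a subclass $\mathcal{Q}$ of all continuous homogeneous polynomials between Banach spaces, with components $\mathcal{Q}(^jX;Y)=\mathcal{P}(^jX;Y)\cap\mathcal{Q}$ that are linear subspaces containing the finite-type polynomials, together with a function $\|\cdot\|_\mathcal{Q}$ that is a complete norm on each component, with $\|\lambda\in\mathbb{K}\mapsto\lambda^j\|_\mathcal{Q}=1$ for every $j$, and such that $t\circ P\circ u\in\mathcal{Q}(^jX;H)$ with $\|t\circ P\circ u\|_\mathcal{Q}\le\|t\|\,\|P\|_\mathcal{Q}\,\|u\|^j$ whenever $t\in\mathcal{L}(G;H)$, $P\in\mathcal{Q}(^jY;G)$, $u\in\mathcal{L}(X;Y)$. For $q\in\mathcal{P}(^jX)$ and $y\in Y$, $q\otimes y$ is the polynomial $x\mapsto q(x)y$. $(\mathcal{Q},\|\cdot\|_\mathcal{Q})$ contains the finite rank polynomials strongly if for each $j$ there is a constant $K_j$ such that for all Banach spaces $X,Y$, $q\in\mathcal{P}(^jX)$, $y\in Y$: $q\otimes y\in\mathcal{Q}(^jX;Y)$ and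 $\|q\otimes y\|_\mathcal{Q}\le K_j\|q\|\,\|y\|$. The spaces $\mathcal{Q}(^mF_1;E)$, $\mathcal{Q}(^mE_1;F)$ carry the norm $\|\cdot\|_\mathcal{Q}$. *)

From HB Require Import structures.
From mathcomp Require Import all_boot all_order all_algebra.
From mathcomp Require Import all_classical all_reals all_analysis.
From mathcomp Require Import complex.
Set Implicit Arguments. Unset Strict Implicit. Unset Printing Implicit Defensive.
Import Order.TTheory GRing.Theory Num.Theory.
Import numFieldNormedType.Exports.
Local Open Scope ring_scope.

Variant Kind := RealK | ComplexK.
Definition scalars (R : realType) (k : Kind) : numFieldType :=
  match k with RealK => (R : numFieldType) | ComplexK => (R[i] : numFieldType) end.

Section Defs.
Variable K : numFieldType.

Definition banach (X : normedModType K) : Prop :=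
  forall F : set_system X, ProperFilter F -> cauchy F -> cvg F.

Definition lin (X Y : normedModType K) (f : X -> Y) : Prop :=
  forall (a : K) (u v : X), f (a *: u + v) = a *: f u + f v.

Definition bounded_op (X Y : normedModType K) (f : X -> Y) : Prop :=
  lin f /\ continuous f.

Definition sup_ball_norm (X Y : normedModType K) (f : X -> Y) (c : K) : Prop :=
  (forall x : X, `|x| <= 1 -> `|f x| <= c) /\
  (forall e : K, 0 < e -> exists x : X, `|x| <= 1 /\ c - e < `|f x|).

Definition multilin (j : nat) (X Y : normedModType K) (A : ('I_j -> X) -> Y) : Prop :=
  forall (x : 'I_j -> X) (i : 'I_j) (a : K) (u v : X),
    A (fun k => if k == i then a *: u + v else x k) =
    a *: A (fun k => if k == i then u else x k) + A (fun k => if k == i then v else x k).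

Definition hpoly (j : nat) (X Y : normedModType K) (P : X -> Y) : Prop :=
  exists A : {ptws 'I_j -> X} -> Y,
    multilin (A : ('I_j -> X) -> Y) /\ continuous A /\ forall x : X, P x = A (fun _ => x).

(* Operator ideal (Pietsch).  [oi_mem X Y T] means T \in A(X;Y); the axioms
   are imposed for Banach spaces X, Y (values on non-complete spaces are
   irrelevant). *)
Record opideal := OpIdeal {
  oi_mem : forall X Y : normedModType K, (X -> Y) -> Prop;
  oi_sub : forall (X Y : normedModType K), banach X -> banach Y ->
    forall T : X -> Y, oi_mem T -> bounded_op T;
  oi_lin : forall (X Y : normedModType K), banach X -> banach Y ->
    forall (a : K) (S T : X -> Y), oi_mem S -> oi_mem T ->
      oi_mem (fun x => a *: S x + T x);
  oi_finrank : forall (X Y : normedModType K), banach X -> banach Y ->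
    forall (phi : X -> K^o) (y : Y), bounded_op phi ->
      oi_mem (fun x => (phi x : K) *: y);
  oi_ideal : forall (X0 X Y Y0 : normedModType K),
    banach X0 -> banach X -> banach Y -> banach Y0 ->
    forall (T : X0 -> X) (S : X -> Y) (U : Y -> Y0),
      bounded_op T -> oi_mem S -> bounded_op U -> oi_mem (U \o S \o T)
}.

(* The component Q(^jX;Y), with its norm
   ||.||_Q, is given as a normed space [pi_sp j X Y] together with an
   injective linear embedding [pi_emb] into the maps X -> Y; the component is
   the image of [pi_emb] and ||pi_emb p||_Q = `|p|. *)
Record polyideal := PolyIdeal {
  pi_sp : nat -> normedModType K -> normedModType K -> normedModType K;
  pi_emb : forall j (X Y : normedModType K), pi_sp j X Y -> X -> Y;
  pi_emb_lin : forall j (X Y : normedModType K) (a : K) (p q : pi_sp j X Y) (x : X),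
    pi_emb (a *: p + q) x = a *: pi_emb p x + pi_emb q x;
  pi_emb_inj : forall j (X Y : normedModType K), injective (@pi_emb j X Y);
  pi_banach : forall j (X Y : normedModType K), banach X -> banach Y ->
    banach (pi_sp j X Y);
  pi_poly : forall j (X Y : normedModType K), banach X -> banach Y ->
    forall p : pi_sp j X Y, hpoly j (pi_emb p);
  pi_fintype : forall j (X Y : normedModType K), banach X -> banach Y ->
    forall s : seq ((X -> K^o) * Y), (forall q, q \in s -> bounded_op q.1) ->
      exists p : pi_sp j X Y,
        pi_emb p = (fun x => \sum_(q <- s) ((q.1 x : K) ^+ j) *: q.2);
  pi_norm1 : forall j (p : pi_sp j K^o K^o),
    pi_emb p = (fun l : K^o => ((l : K) ^+ j : K^o)) -> `|p| = 1;
  pi_ideal : forall j (X Y G H : normedModType K),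
    banach X -> banach Y -> banach G -> banach H ->
    forall (t : G -> H) (P : pi_sp j Y G) (u : X -> Y),
      bounded_op t -> bounded_op u ->
      exists p : pi_sp j X H, pi_emb p = t \o pi_emb P \o u /\
        forall ct cu, sup_ball_norm t ct -> sup_ball_norm u cu ->
          `|p| <= ct * `|P| * cu ^+ j
}.

Definition strongly_finrank (Q : polyideal) : Prop :=
  forall j : nat, exists Kj : K,
    forall (X Y : normedModType K), banach X -> banach Y ->
    forall (q : X -> K^o) (y : Y), hpoly j q ->
      exists p : pi_sp Q j X Y, pi_emb p = (fun x => (q x : K) *: y) /\
        forall cq, sup_ball_norm q cq -> `|p| <= Kj * cq * `|y|.

(* G (via phi) is a model of the Banach space P(^jX) of continuous
   j-homogeneous scalar polynomials with the sup norm: phi is a linear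
   isometric bijection from G onto P(^jX). *)
Record polyspace_model (j : nat) (X G : normedModType K) (phi : G -> X -> K^o) : Prop := {
  pm_lin : forall (a : K) (g h : G) (x : X), phi (a *: g + h) x = a *: phi g x + phi h x;
  pm_inj : injective phi;
  pm_onto : forall P : X -> K^o, hpoly j P <-> exists g : G, phi g = P;
  pm_norm : forall g : G, sup_ball_norm (phi g) `|g|
}.

End Defs.

From HB Require Import structures.
From mathcomp Require Import all_boot all_order all_algebra.
From mathcomp Require Import all_classical all_reals all_analysis.
From mathcomp Require Import complex.
From mathcomp Require Import ring lra.
Import Order.TTheory GRing.Theory Num.Theory.
Import numFieldNormedType.Exports.
Set Implicit Arguments. Unset Strict Implicit. Unset Printing Implicit Defensive.
Local Open Scope ring_scope.

(* Both operators are factored through S_RB as U o S_RB o J with U and J bounded.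
   (a) Pick x0 and a norm-one functional psi with psi (B x0) = 1 (Hahn-Banach).  Then
   J e := psi^m (.) e and U P := P x0 satisfy U (R o J e o B) = R e.
   (b) Pick e0 and a norm-one functional phi with phi (R e0) = 1.  J q := q (.) e0 is
   bounded because Q contains the finite rank polynomials strongly, U P := phi o P is
   bounded because the Q-norm dominates the sup norm, and U (R o J q o B) = q o B.
   The ideal property needs the spaces of scalar polynomials to be complete; they are,
   being isomorphic to Q(^m X; K) by strong containment. *)

Section RealHahnBanach.
Local Open Scope classical_set_scope.
(* V is a real vector space through iota; for complex V take iota := real_complex R. *)
Variables (R : realType) (K : numFieldType) (iota : {rmorphism R -> K}).
Variables (V : lmodType K) (p : V -> R).
Hypothesis pZ : forall a u, p (iota a *: u) = `|a| * p u.
Hypothesis pD : forall u v, p (u + v) <= p u + p v.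

Lemma seminorm0 : p 0 = 0.
Proof. by rewrite -(scaler0 _ (iota 0)) pZ normr0 mul0r. Qed.

Lemma seminormN u : p (- u) = p u.
Proof. by rewrite -scaleN1r -(rmorphN1 iota) pZ normrN normr1 mul1r. Qed.

Lemma seminorm_ge0 u : 0 <= p u.
Proof. by have := pD u (- u); rewrite subrr seminorm0 seminormN; lra. Qed.

(* Dominated partial functionals are handled through their graphs, so that chains are
   bounded by plain unions; a linear dominated graph is automatically functional. *)
Definition linear_graph (G : set (V * R)) :=
  G (0, 0) /\ forall a u v r s, G (u, r) -> G (v, s) -> G (iota a *: u + v, a * r + s).

Definition dominated_graph (G : set (V * R)) := forall u r, G (u, r) -> r <= p u.

Definition hb_graph G := linear_graph G /\ dominated_graph G.

Lemma linear_graphZ G a u r : linear_graph G -> G (u, r) -> G (iota a *: u, a * r).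
Proof. by move=> [G00 GD] Gr; have := GD a _ _ _ _ Gr G00; rewrite !addr0. Qed.

Lemma hb_graph_functional G u r s : hb_graph G -> G (u, r) -> G (u, s) -> r = s.
Proof.
move=> [[_ GD] Gp] Gr Gs.
have le_diff a b : G (u, a) -> G (u, b) -> a - b <= 0.
  move=> Ga Gb; have := Gp _ _ (GD (-1) _ _ _ _ Gb Ga).
  by rewrite rmorphN1 scaleN1r addNr seminorm0 mulN1r addrC.
by apply/eqP; rewrite eq_le -subr_le0 le_diff //= -subr_le0 le_diff.
Qed.

Lemma hb_graph_bigcup (F : set (set (V * R))) : F !=set0 -> total_on F subset ->
  (forall G, F G -> hb_graph G) -> hb_graph (\bigcup_(G in F) G).
Proof.
move=> [G0 FG0] Ftot Fhb.
have common a b : (\bigcup_(G in F) G) a -> (\bigcup_(G in F) G) b ->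
    exists2 G, F G & G a /\ G b.
  move=> [G1 F1 G1a] [G2 F2 G2b]; have [G12|G21] := Ftot _ _ F1 F2.
  - by exists G2 => //; split => //; apply: G12.
  - by exists G1 => //; split => //; apply: G21.
split; [split|].
- by exists G0 => //; case: (Fhb _ FG0) => -[].
- move=> a u v r s Gu Gv; have [G FG [{}Gu {}Gv]] := common _ _ Gu Gv.
  by exists G => //; case: (Fhb _ FG) => -[_ GD] _; apply: GD.
- by move=> u r [G FG Gu]; case: (Fhb _ FG) => _; apply.
Qed.

Definition extension_constant (G : set (V * R)) z c :=
  forall x r, G (x, r) -> r + c <= p (x + z) /\ r - c <= p (x - z).

(* c := sup {r - p (x - z) | (x, r) in G}, bounded by every p (y + z) - s by subadditivity *)
Lemma exists_extension_constant G z : hb_graph G -> exists c, extension_constant G z c.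
Proof.
move=> [[G00 GD] Gp].
pose S := [set t | exists x r, G (x, r) /\ t = r - p (x - z)].
have S0 : S !=set0 by exists (0 - p (0 - z)), 0, 0.
have ubS y s : G (y, s) -> ubound S (p (y + z) - s).
  move=> Gys _ [x [r [Gxr ->]]].
  have := Gp _ _ (GD 1 _ _ _ _ Gxr Gys); rewrite rmorph1 scale1r mul1r => Gsum.
  have : p (x + y) <= p (x - z) + p (y + z).
    by have := pD (x - z) (y + z); rewrite addrACA addNr addr0.
  lra.
exists (sup S) => x r Gxr; split.
- by have := ge_sup S0 (ubS _ _ Gxr); lra.
- have : S (r - p (x - z)) by exists x, r.
  by move=> /(ub_le_sup (ex_intro _ _ (ubS _ _ G00))); lra.
Qed.

Definition line_ext (G : set (V * R)) z c :=
  [set w | exists x r t, G (x, r) /\ w = (x + iota t *: z, r + t * c)].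

Lemma sub_line_ext G z c : G `<=` line_ext G z c.
Proof. by case=> x r Gxr; exists x, r, 0; rewrite rmorph0 scale0r mul0r !addr0. Qed.

Lemma hb_graph_line_ext G z c : hb_graph G -> extension_constant G z c ->
  hb_graph (line_ext G z c).
Proof.
move=> [lG Gp] hc; split; [split|].
- by exists 0, 0, 0; rewrite rmorph0 scale0r mul0r !addr0; split => //; case: lG.
- move=> a _ _ _ _ [x [r [t [Gxr [-> ->]]]]] [x' [r' [t' [Gxr' [-> ->]]]]].
  exists (iota a *: x + x'), (a * r + r'), (a * t + t'); split; first by case: lG => _; apply.
  congr (_, _); last by ring.
  by rewrite rmorphD rmorphM scalerDr scalerDl scalerA addrACA.
- move=> _ _ [x [r [t [Gxr [-> ->]]]]].
  have [->|t0] := eqVneq t 0; first by rewrite rmorph0 scale0r mul0r !addr0; apply: Gp.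
  have -> : x + iota t *: z = iota t *: (iota t^-1 *: x + z).
    by rewrite scalerDr scalerA -rmorphM mulfV // rmorph1 scale1r.
  rewrite pZ; case/orP: (lt_total t0) => [tneg|tpos].
  + have := (hc _ _ (linear_graphZ (- t^-1) lG Gxr)).2.
    rewrite rmorphN scaleNr -opprD seminormN ltr0_norm // => le_p.
    have -> : r + t * c = - t * (- t^-1 * r - c) by field.
    by apply: ler_wpM2l le_p; rewrite oppr_ge0 ltW.
  + have le_p := (hc _ _ (linear_graphZ t^-1 lG Gxr)).1.
    have -> : r + t * c = t * (t^-1 * r + c) by field.
    by rewrite gtr0_norm //; apply: ler_wpM2l le_p; rewrite ltW.
Qed.

Lemma hahn_banach_graph G0 : hb_graph G0 -> exists f : V -> R,
  [/\ forall a u v, f (iota a *: u + v) = a * f u + f v, forall u, f u <= p u &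
      forall u r, G0 (u, r) -> f u = r].
Proof.
move=> hb0.
pose P G := hb_graph G /\ G0 `<=` G.
pose T := {G : set (V * R) | P G}.
pose le (s t : T) := `[< sval s `<=` sval t >].
pose t0 : T := exist P G0 (conj hb0 (@subset_refl _ G0)).
have [|||[G PG] Gmax] := @ZL_preorder T t0 le.
- by move=> s; apply/asboolP.
- by move=> r s t /asboolP rs /asboolP st; apply/asboolP; apply: subset_trans st.
- move=> A Atot; have [[s As]|A0] := pselect (A !=set0); last first.
    by exists t0 => s As; case: A0; exists s.
  have hbU : hb_graph (\bigcup_(G in sval @` A) G).
    apply: hb_graph_bigcup.
    - by exists (sval s), s.
    - move=> _ _ [s1 A1 <-] [s2 A2 <-].
      by case: (Atot _ _ A1 A2) => /asboolP; [left|right].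
    - by move=> _ [s' _ <-]; case: (svalP s').
  have G0U : G0 `<=` \bigcup_(G in sval @` A) G.
    by move=> w G0w; exists (sval s); [exists s | case: (svalP s) => _; apply].
  exists (exist P _ (conj hbU G0U)) => s' As'; apply/asboolP => w s'w.
  by exists (sval s'); [exists s'|].
- have [hbG G0G] := PG.
  have total u : exists r, G (u, r).
    have [c hc] := exists_extension_constant u hbG.
    have hbG' := hb_graph_line_ext hbG hc.
    have G0G' := subset_trans G0G (@sub_line_ext G u c).
    have /asboolP G'G := Gmax (exist P _ (conj hbG' G0G')) (asboolT (@sub_line_ext G u c)).
    exists c; apply: G'G; exists 0, 0, 1.
    by rewrite rmorph1 scale1r mul1r !add0r; split => //; case: hbG => -[].
  pose f u := projT1 (cid (total u)).
  have Gf u : G (u, f u) := projT2 (cid (total u)).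
  exists f; split.
  + move=> a u v; apply: (hb_graph_functional hbG (Gf _)).
    by case: hbG => -[_ GD] _; apply: GD.
  + by move=> u; case: hbG => _; apply.
  + by move=> u r /G0G Gur; apply: (hb_graph_functional hbG (Gf u)).
Qed.

Lemma real_hahn_banach (y : V) : exists f : V -> R,
  [/\ forall a u v, f (iota a *: u + v) = a * f u + f v, forall u, f u <= p u &
      f y = p y].
Proof.
pose G0 := [set (iota t *: y, t * p y) | t in [set: R]].
have hb0 : hb_graph G0.
  split; [split|].
  - by exists 0 => //; rewrite rmorph0 scale0r mul0r.
  - move=> a u v r s [t _ [<- <-]] [t' _ [<- <-]]; exists (a * t + t') => //.
    by rewrite rmorphD rmorphM scalerDl scalerA mulrDl mulrA.
  - move=> u r [t _ [<- <-]]; rewrite pZ.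
    exact: ler_wpM2r (seminorm_ge0 y) _ _ (real_ler_norm (num_real t)).
have [f [flin fp fG0]] := hahn_banach_graph hb0.
by exists f; split => //; apply: fG0; exists 1 => //; rewrite rmorph1 scale1r mul1r.
Qed.

End RealHahnBanach.

Section LinearMaps.
Variables (K : numFieldType) (X Y : normedModType K) (f : X -> Y).
Hypothesis flin : lin f.

Lemma lin0 : f 0 = 0.
Proof. by have := flin 1 0 0; rewrite scale1r addr0 scale1r -{1}[f 0]addr0 => /addrI/esym. Qed.

Lemma linD u v : f (u + v) = f u + f v.
Proof. by rewrite -[u]scale1r flin !scale1r. Qed.

Lemma linZ a u : f (a *: u) = a *: f u.
Proof. by rewrite -[a *: u]addr0 flin lin0 addr0. Qed.

Lemma linN u : f (- u) = - f u.
Proof. by rewrite -scaleN1r linZ scaleN1r. Qed.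

Lemma linB u v : f (u - v) = f u - f v.
Proof. by rewrite linD linN. Qed.

End LinearMaps.

Section NormedSpaces.
Local Open Scope classical_set_scope.
Variable K : numFieldType.
Implicit Types X Y : normedModType K.

Lemma lipschitz_bounded_op X Y (f : X -> Y) (C : K) :
  0 <= C -> lin f -> (forall x, `|f x| <= C * `|x|) -> bounded_op f.
Proof.
move=> C0 flin f_le; split => // x.
have C1 : 0 < C + 1 by rewrite ltr_wpDl.
apply/cvgrPdist_lt => e e0; near=> t.
rewrite -linB //; apply: le_lt_trans (f_le _) _.
apply: (@le_lt_trans _ _ ((C + 1) * `|x - t|)); first by rewrite ler_wpM2r ?lerDl.
rewrite -ltr_pdivlMl // mulrC; near: t.
by apply: cvgr_dist_lt; [exact: cvg_id | exact: divr_gt0].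
Unshelve. all: by end_near.
Qed.

Lemma bounded_op_scale X (x : X) : bounded_op (fun l : K^o => l *: x).
Proof.
apply: (@lipschitz_bounded_op _ _ _ `|x|) => // [a u v|l].
- by rewrite scalerDl scalerA.
- by rewrite normrZ mulrC.
Qed.

Lemma sup_ball_norm_le X Y (f : X -> Y) c d :
  sup_ball_norm f c -> (forall x, `|x| <= 1 -> `|f x| <= d) -> c <= d.
Proof.
move=> [_ c_sup] f_le.
have [x [x1 /ltW c1]] := c_sup 1 ltr01.
have c_real : c \is Num.real.
  have c1_real : c - 1 \is Num.real by rewrite (ler_real c1) realE normr_ge0.
  by rewrite -(subrK 1 c) rpredD ?rpred1.
have d_real : d \is Num.real by apply: ger0_real; apply: le_trans (f_le x x1).
rewrite real_leNgt //; apply/negP => dc.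
have cd0 : 0 < c - d by rewrite subr_gt0.
have [y [y1]] := c_sup _ cd0.
by rewrite opprB addrC subrK => /lt_le_trans/(_ (f_le y y1)); rewrite ltxx.
Qed.

Lemma sup_ball_norm_scale X (x : X) : sup_ball_norm (fun l : K^o => l *: x) `|x|.
Proof.
split=> [l l1|e e0]; first by rewrite normrZ ler_piMl.
by exists 1; rewrite normr1 scale1r ltrBlDr ltrDl.
Qed.

Lemma le_norm_mulr (a b c : K) : 0 <= a -> a <= b * c -> 0 <= c -> a <= `|b| * c.
Proof.
move=> a0 ab c0.
have bc_real : b * c \is Num.real by apply: ger0_real; apply: le_trans a0 ab.
apply: le_trans ab (le_trans (real_ler_norm bc_real) _).
by rewrite normrM (ger0_norm c0).
Qed.

Lemma multilinZ j X Y (A : ('I_j -> X) -> Y) (x : 'I_j -> X) i a u : multilin A ->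
  A (fun k => if k == i then a *: u else x k) = a *: A (fun k => if k == i then u else x k).
Proof.
move=> mA; have slot0 : A (fun k => if k == i then 0 else x k) = 0.
  by have := mA x i 1 0 0; rewrite scale1r addr0 scale1r -{1}[A _]addr0 => /addrI/esym.
by have := mA x i a u 0; rewrite addr0 slot0 addr0.
Qed.

Lemma hpolyZ j X Y (P : X -> Y) a x : hpoly j P -> P (a *: x) = a ^+ j *: P x.
Proof.
move=> [A [mA [_ PA]]]; rewrite !PA.
pose xs n (k : 'I_j) := if (k < n)%N then a *: x else x.
suff xsE n : (n <= j)%N -> A (xs n) = a ^+ n *: A (fun _ => x).
  by rewrite -xsE //; congr A; apply: funext => k; rewrite /xs ltn_ord.
elim: n => [_|n IHn ltnj]; first by rewrite expr0 scale1r.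
pose i : 'I_j := Ordinal ltnj.
have -> : xs n.+1 = (fun k => if k == i then a *: x else xs n k).
  apply: funext => k; rewrite /xs ltnS leq_eqVlt.
  by rewrite -val_eqE /=; case: eqP.
rewrite multilinZ //.
have -> : (fun k => if k == i then x else xs n k) = xs n.
  by apply: funext => k; case: eqP => // ->; rewrite /xs (ltnn n).
by rewrite IHn ?(ltnW ltnj) // scalerA exprS.
Qed.

Lemma hpoly_comp (j : nat) X Y (Z : normedModType K) (t : Y -> Z) (P : X -> Y) :
  bounded_op t -> hpoly j P -> hpoly j (t \o P).
Proof.
move=> [tlin tcont] [A [mA [Acont PA]]]; exists (t \o A); split; [|split].
- by move=> x i a u v /=; rewrite mA linD // linZ.
- by move=> x; apply: continuous_comp; [exact: Acont | exact: tcont].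
- by move=> x /=; rewrite PA.
Qed.

Lemma banach_linear_iso X Y (Psi : X -> Y) (c C : K) : banach Y -> lin Psi ->
  0 < c -> 0 <= C -> (forall x, c * `|x| <= `|Psi x|) -> (forall x, `|Psi x| <= C * `|x|) ->
  (forall y, exists x, Psi x = y) -> banach X.
Proof.
move=> hY Psilin c0 C0 Psi_ge Psi_le Psi_onto F PF /cauchyP Fc.
have C1 : 0 < C + 1 by rewrite ltr_wpDl.
have : cauchy (Psi @ F).
  apply: cauchy_exP => e e0.
  have [x Fx] := Fc _ (divr_gt0 e0 C1).
  exists (Psi x); rewrite /= /fmap /=; apply: filterS _ Fx => t.
  rewrite -!ball_normE /= -linB // => lt_e.
  apply: le_lt_trans (Psi_le _) _.
  apply: (@le_lt_trans _ _ ((C + 1) * `|x - t|)); first by rewrite ler_wpM2r ?lerDl.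
  by rewrite -ltr_pdivlMl // mulrC.
move=> /(hY _ _) /cvg_ex [y Fy].
have [x0 Psix0] := Psi_onto y; rewrite -Psix0 in Fy.
apply/cvg_ex; exists x0; apply/cvgrPdist_lt => e e0.
move/cvgrPdist_lt: Fy => /(_ (c * e) (mulr_gt0 c0 e0)).
apply: filterS => t /=; rewrite -linB // => lt_ce.
by rewrite -(ltr_pM2l c0); apply: le_lt_trans (Psi_ge _) lt_ce.
Qed.

Definition pointwise_lin (S X Y : normedModType K) (e : S -> X -> Y) :=
  forall a s s' x, e (a *: s + s') x = a *: e s x + e s' x.

Lemma bounded_lift (H S X Y : normedModType K)
    (e : S -> X -> Y) (f : H -> X -> Y) (C : K) :
  injective e -> pointwise_lin e -> pointwise_lin f -> 0 <= C ->
  (forall h, exists2 s, e s = f h & `|s| <= C * `|h|) ->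
  exists J : H -> S,
    [/\ bounded_op J, forall h, `|J h| <= C * `|h| & forall h, e (J h) = f h].
Proof.
move=> einj elin flin C0 lift.
pose J h := projT1 (cid2 (lift h)).
have eJ h : e (J h) = f h by rewrite /J; case: cid2.
have J_le h : `|J h| <= C * `|h| by rewrite /J; case: cid2.
have Jlin : lin J.
  by move=> a h h'; apply: einj; apply: funext => x; rewrite elin !eJ flin.
by exists J; split => //; apply: lipschitz_bounded_op Jlin J_le.
Qed.

End NormedSpaces.

Definition norming_functionals (K : numFieldType) := forall (V : normedModType K) (y : V),
  exists phi : V -> K^o, [/\ lin phi, forall z, `|phi z| <= `|z| & phi y = `|y|].

Lemma norming_functionals_real (R : realType) : norming_functionals (scalars R RealK).
Proof.
move=> V y.
have [f [flin fle fy]] := real_hahn_banach (iota := idfun) (p := fun u : V => `|u|)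
  (fun a u => normrZ a u) (@ler_normD _ V) y.
have flin' : lin (f : V -> (scalars R RealK)^o) by move=> a u v; apply: flin.
exists f; split => // z; rewrite ler_norml fle andbT lerNl -linN //.
by rewrite -(normrN z) fle.
Qed.

Section Complexification.
Local Open Scope complex_scope.
Variables (R : realType) (V : lmodType R[i]) (f : V -> R).
Hypothesis flin : forall a u v, f (a%:C *: u + v) = a * f u + f v.

Definition complexify u : R[i] := (f u : R)%:C - 'i * (f ('i *: u) : R)%:C.

Lemma Re_complexify u : complex.Re (complexify u) = f u.
Proof. by rewrite /complexify /=; simpc. Qed.

Let f0 : f 0 = 0.
Proof. by have := flin 1 0 0; rewrite !addr0 scaler0 mul1r -{1}[f 0]addr0 => /addrI/esym. Qed.

Let fD u v : f (u + v) = f u + f v.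
Proof. by have := flin 1 u v; rewrite scale1r mul1r. Qed.

Let fZ a u : f (a%:C *: u) = a * f u.
Proof. by have := flin a u 0; rewrite !addr0 f0 addr0. Qed.

Lemma complexify_lin a u v : complexify (a *: u + v) = a * complexify u + complexify v.
Proof.
case: a => ar ai.
have splitZ w : (ar +i* ai) *: w = ar%:C *: w + ai%:C *: ('i *: w).
  by rewrite scalerA -scalerDl; congr (_ *: _); apply/eqP; rewrite eq_complex /=; simpc.
have iZ w : 'i *: ('i *: w) = (-1)%:C *: w.
  by rewrite scalerA; congr (_ *: _); apply/eqP; rewrite eq_complex /=; simpc.
have iZr r w : 'i *: (r%:C *: w) = r%:C *: ('i *: w) by rewrite !scalerA mulrC.
rewrite /complexify splitZ !scalerDr !iZr iZ !fD !fZ.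
by apply/eqP; rewrite eq_complex /=; simpc.
Qed.

End Complexification.

Section ComplexNumbers.
Local Open Scope complex_scope.
Variable R : realType.

Lemma normc_real (r : R) : `|r%:C| = `|r|%:C.
Proof. by rewrite normc_def /= expr0n addr0 sqrtr_sqr. Qed.

Lemma Re_realM (r : R) (w : R[i]) : complex.Re (r%:C * w) = r * complex.Re w.
Proof. by case: w => a b /=; simpc. Qed.

Lemma ReD (w z : R[i]) : complex.Re (w + z) = complex.Re w + complex.Re z.
Proof. by case: w; case: z. Qed.

Lemma ger0_complex_Re (w : R[i]) : 0 <= w -> w = (complex.Re w)%:C.
Proof. by move=> /ger0_real /RRe_real. Qed.

Lemma eq_Re_of_normc_le (w : R[i]) : `|w| <= (complex.Re w)%:C -> w = (complex.Re w)%:C.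
Proof.
case: w => a b; rewrite normc_def lecR /= => le_norm.
have a0 : 0 <= a := le_trans (sqrtr_ge0 _) le_norm.
move: le_norm; rewrite -[X in _ <= X](ger0_norm a0) -sqrtr_sqr ler_sqrt ?sqr_ge0 //.
rewrite gerDl => b2_le0.
by have /eqP -> : b == 0 by rewrite -sqrf_eq0 eq_le b2_le0 sqr_ge0.
Qed.

Lemma Re_le_normc (x : R[i]) : `|complex.Re x| <= complex.Re `|x|.
Proof. by have := normc_ge_Re x; rewrite lecE => /andP[_]; rewrite /=; simpc. Qed.

Lemma Im_le_normc (x : R[i]) : `|complex.Im x| <= complex.Re `|x|.
Proof.
have := Re_le_normc (x * 'i); rewrite ReiNIm normrN normrM.
by rewrite normCi mulr1.
Qed.

Lemma normc_le_ReIm (x : R[i]) : complex.Re `|x| <= `|complex.Re x| + `|complex.Im x|.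
Proof.
have := ler_normD (complex.Re x)%:C ('i * (complex.Im x)%:C).
by rewrite -complexE normrM normCi mul1r !normc_real lecE => /andP[_]; rewrite /=; simpc.
Qed.

End ComplexNumbers.

Lemma norming_functionals_complex (R : realType) : norming_functionals (scalars R ComplexK).
Proof.
move=> V y.
pose p (u : V) := complex.Re `|u|.
have pZ a u : p ((a%:C)%C *: u) = `|a| * p u by rewrite /p normrZ normc_real Re_realM.
have pD u v : p (u + v) <= p u + p v.
  by have := ler_normD u v; rewrite lecE => /andP[_]; rewrite ReD.
have [f [flin fle fy]] := real_hahn_banach (iota := real_complex R) pZ pD y.
pose phi : V -> (scalars R ComplexK)^o := complexify f.
have philin : lin phi by move=> a u v; apply: complexify_lin.
have phi_le z : `|phi z| <= `|z|.
  have [->|phiz0] := eqVneq (phi z) 0; first by rewrite normr0.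
  pose om : scalars R ComplexK := (phi z)^* / `|phi z|.
  have phi_om : phi (om *: z) = `|phi z|.
    by rewrite linZ // /om /GRing.scale /= mulrAC -normCKC expr2 mulfK ?normr_eq0.
  have om1 : `|om| = 1.
    by rewrite /om normrM normfV norm_conjC normr_id mulfV ?normr_eq0.
  have := fle (om *: z); rewrite -Re_complexify -/phi phi_om /p normrZ om1 mul1r.
  move=> le_Re; rewrite (ger0_complex_Re (normr_ge0 (phi z))).
  by rewrite (ger0_complex_Re (normr_ge0 z)) lecR.
exists phi; split => //.
have Re_phiy : complex.Re (phi y) = complex.Re `|y| by rewrite Re_complexify.
by rewrite [LHS]eq_Re_of_normc_le Re_phiy -?ger0_complex_Re ?normr_ge0 ?phi_le.
Qed.

Section ComplexComplete.
Local Open Scope classical_set_scope.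
Local Open Scope complex_scope.
Variable R : realType.
Local Notation C := (scalars R ComplexK)^o.

Lemma cauchy_coordinate (F : set_system C) (g : C -> R) : ProperFilter F -> cauchy F ->
  (forall x y, `|g x - g y| <= complex.Re `|x - y|) -> cauchy (g @ F).
Proof.
move=> PF /cauchyP Fc g_lip; apply: cauchy_exP => e e0.
have e0C : 0 < e%:C :> C by rewrite ltcR.
have [x Fx] := Fc _ e0C.
exists (g x); rewrite /= /fmap /=; apply: filterS _ Fx => t.
rewrite -!ball_normE /= ltcE => /andP[_ lt_e].
exact: le_lt_trans (g_lip _ _) lt_e.
Qed.

Lemma banach_complex : banach C.
Proof.
move=> F PF Fc.
have cvg_coordinate (g : C -> R) : (forall x y, g x - g y = g (x - y)) ->
    (forall x, `|g x| <= complex.Re `|x|) -> cvg (g @ F).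
  move=> gB g_le; apply: cauchy_cvg; apply: cauchy_coordinate => // x y.
  by rewrite gB g_le.
have ReB (x y : C) : complex.Re x - complex.Re y = complex.Re (x - y) by case: x; case: y.
have ImB (x y : C) : complex.Im x - complex.Im y = complex.Im (x - y) by case: x; case: y.
have [a Fa] := (cvg_ex _).1 (cvg_coordinate _ ReB (@Re_le_normc R)).
have [b Fb] := (cvg_ex _).1 (cvg_coordinate _ ImB (@Im_le_normc R)).
apply/cvg_ex; exists (a +i* b).
apply/cvgrPdist_lt => e; rewrite ltcE => /andP[/eqP Im_e Re_e].
have Re_e2 : 0 < complex.Re e / 2 by apply: divr_gt0.
have Re_near := (cvgrPdist_lt _ _).1 Fa _ Re_e2.
have Im_near := (cvgrPdist_lt _ _).1 Fb _ Re_e2.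
apply: filterS2 (Re_near _) (Im_near _) => t Re_t Im_t.
rewrite ltcE Im_e ger0_Im ?normr_ge0 // eqxx /=.
apply: le_lt_trans (normc_le_ReIm _) _.
by rewrite -ReB -ImB /=; move: Re_t Im_t; lra.
Qed.

End ComplexComplete.

Lemma banach_scalars (R : realType) (k : Kind) : banach (scalars R k)^o.
Proof. by case: k; [move=> F PF; apply: cauchy_cvg | apply: banach_complex]. Qed.

Lemma norming_functionals_scalars (R : realType) (k : Kind) : norming_functionals (scalars R k).
Proof. by case: k; [apply: norming_functionals_real | apply: norming_functionals_complex]. Qed.

Section NormingFunctionals.
Variables (K : numFieldType) (HB : norming_functionals K).

Lemma norming_functional_sup (V : normedModType K) (y : V) : y != 0 ->
  exists psi : V -> K^o, [/\ bounded_op psi, sup_ball_norm psi 1 & psi y = `|y|].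
Proof.
move=> y0; have [psi [psilin psi_le psiy]] := HB y.
have ny0 : `|y| != 0 by rewrite normr_eq0.
exists psi; split => //.
- by apply: (@lipschitz_bounded_op _ _ _ _ 1) => // z; rewrite mul1r.
- split=> [z z1|e e0]; first exact: le_trans (psi_le z) z1.
  exists (`|y|^-1 *: y); rewrite normrZ normfV normr_id mulVf //; split => //.
  by rewrite linZ // psiy /GRing.scale /= mulVf // normr1 ltrBlDr ltrDl.
Qed.

Lemma exists_functional_one (X V : normedModType K) (T : X -> V) : lin T ->
  (exists x, T x != 0) ->
  exists x (psi : V -> K^o), [/\ bounded_op psi, sup_ball_norm psi 1 & psi (T x) = 1].
Proof.
move=> Tlin [x Tx0]; have [psi [bpsi spsi psiT]] := norming_functional_sup Tx0.
exists (`|T x|^-1 *: x), psi; split => //.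
case: bpsi => psilin _.
by rewrite !linZ // psiT /GRing.scale /= mulVf ?normr_eq0.
Qed.

End NormingFunctionals.

Section PolynomialIdeal.
Variables (K : numFieldType) (Q : polyideal K) (m : nat).
Hypothesis BK : banach K^o.
Implicit Types X Y : normedModType K.

Lemma pi_embZ X Y a (p : pi_sp Q m X Y) x : pi_emb (a *: p) x = a *: pi_emb p x.
Proof.
have emb0 : pi_emb (0 : pi_sp Q m X Y) x = 0.
  have := @pi_emb_lin _ Q m X Y 1 0 0 x.
  by rewrite scale1r addr0 scale1r -{1}[pi_emb 0 x]addr0 => /addrI/esym.
by have := pi_emb_lin a p 0 x; rewrite !addr0 emb0 addr0.
Qed.

Lemma exists_pi_monomial : exists p1 : pi_sp Q m K^o K^o,
  pi_emb p1 = (fun l : K^o => (l ^+ m : K^o)) /\ `|p1| = 1.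
Proof.
have id_bounded : bounded_op (fun l : K^o => l).
  by have := bounded_op_scale (1 : K^o); under eq_fun do rewrite /GRing.scale /= mulr1.
have [|p1 p1E] := @pi_fintype _ Q m K^o K^o BK BK [:: (fun l : K^o => l, 1 : K^o)].
  by move=> q; rewrite inE => /eqP ->.
have p1E' : pi_emb p1 = (fun l : K^o => (l ^+ m : K^o)).
  by rewrite p1E; apply: funext => l; rewrite big_seq1 /= /GRing.scale /= mulr1.
by exists p1; split => //; apply: pi_norm1.
Qed.

Lemma pi_monomial_norm (p : pi_sp Q m K^o K^o) (c : K) :
  pi_emb p = (fun l : K^o => (l ^+ m * c : K^o)) -> `|p| = `|c|.
Proof.
move=> pE; have [p1 [p1E p1_norm]] := exists_pi_monomial.
have -> : p = c *: p1.
  by apply: pi_emb_inj; apply: funext => l; rewrite pE pi_embZ p1E /GRing.scale /= mulrC.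
by rewrite normrZ p1_norm mulr1.
Qed.

Lemma pi_functional_bound X Y (hX : banach X) (hY : banach Y) (t : Y -> K^o) (ct : K)
    (P : pi_sp Q m X Y) x :
  bounded_op t -> sup_ball_norm t ct -> `|t (pi_emb P x)| <= ct * `|P| * `|x| ^+ m.
Proof.
move=> bt st.
have [p [pE p_le]] := @pi_ideal _ Q m K^o X Y K^o BK hX hY BK t P
   (fun l : K^o => l *: x) bt (bounded_op_scale x).
rewrite -(@pi_monomial_norm p (t (pi_emb P x))); first exact: p_le st (sup_ball_norm_scale x).
rewrite pE; apply: funext => l /=.
by rewrite (hpolyZ _ _ (pi_poly hX hY P)) linZ //; case: bt.
Qed.

Hypothesis HB : norming_functionals K.

Lemma pi_emb_norm_le X Y (hX : banach X) (hY : banach Y) (P : pi_sp Q m X Y) x :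
  `|pi_emb P x| <= `|P| * `|x| ^+ m.
Proof.
have [->|Px0] := eqVneq (pi_emb P x) 0; first by rewrite normr0 mulr_ge0 ?exprn_ge0.
have [psi [bpsi spsi psiP]] := norming_functional_sup HB Px0.
by have := pi_functional_bound hX hY P x bpsi spsi; rewrite psiP normr_id mul1r.
Qed.

Lemma banach_polyspace_model X (G : normedModType K) (phi : G -> X -> K^o) :
  banach X -> strongly_finrank Q -> polyspace_model m phi -> banach G.
Proof.
move=> hX SF pm; have [Km Km_bound] := SF m.
have [Psi [[Psilin _] Psi_le PsiE]] : exists Psi : G -> pi_sp Q m X K^o,
    [/\ bounded_op Psi, forall g, `|Psi g| <= `|Km| * `|g| &
         forall g, pi_emb (Psi g) = phi g].
  apply: (@bounded_lift _ _ _ _ _ _ _ `|Km|) => //.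
  - exact: pi_emb_inj.
  - exact: pi_emb_lin.
  - exact: (pm_lin pm).
  move=> g; have [|p [pE p_le]] := Km_bound X K^o hX BK (phi g) 1.
    by apply/(pm_onto pm); exists g.
  exists p; first by rewrite pE; apply: funext => x; rewrite /GRing.scale /= mulr1.
  have := p_le _ (pm_norm pm g); rewrite normr1 mulr1 => le_p.
  exact: le_norm_mulr (normr_ge0 p) le_p (normr_ge0 g).
apply: (banach_linear_iso (pi_banach hX BK) Psilin ltr01 (normr_ge0 Km) _ Psi_le).
- move=> g; rewrite mul1r; apply: sup_ball_norm_le (pm_norm pm g) _ => x x1.
  rewrite -PsiE; apply: le_trans (pi_emb_norm_le hX BK _ x) _.
  by rewrite ler_piMr ?exprn_ile1.
- move=> p; have [g phigE] := (pm_onto pm (pi_emb p)).1 (pi_poly hX BK p).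
  by exists g; apply: pi_emb_inj; rewrite PsiE.
Qed.

Variables (E E1 F F1 : normedModType K).
Hypotheses (hE : banach E) (hE1 : banach E1) (hF : banach F) (hF1 : banach F1).
Variables (Rop : E -> F) (B : E1 -> F1) (A : opideal K).
Variable S_RB : pi_sp Q m F1 E -> pi_sp Q m E1 F.
Hypothesis S_RBE : forall P, pi_emb (S_RB P) = Rop \o pi_emb P \o B.
Hypothesis S_RB_A : oi_mem A S_RB.

Lemma oi_mem_left_factor : lin B -> (exists x, B x != 0) -> oi_mem A Rop.
Proof.
move=> Blin B0.
have [x0 [psi [bpsi spsi psiB]]] := exists_functional_one HB Blin B0.
have [p1 [p1E p1_norm]] := exists_pi_monomial.
have [J [bJ _ JE]] : exists J : E -> pi_sp Q m F1 E, [/\ bounded_op J,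
    forall e, `|J e| <= 1 * `|e| & forall e, pi_emb (J e) = fun y => psi y ^+ m *: e].
  apply: bounded_lift => //; [exact: pi_emb_inj | exact: pi_emb_lin | |].
    by move=> a e e' y; rewrite scalerDr !scalerA mulrC.
  move=> e; have [p [pE p_le]] := @pi_ideal _ Q m F1 K^o K^o E hF1 BK BK hE
    (fun c : K^o => c *: e) p1 psi (bounded_op_scale e) bpsi.
  exists p; first by rewrite pE p1E.
  by have := p_le _ _ (sup_ball_norm_scale e) spsi; rewrite p1_norm expr1n !mulr1 mul1r.
pose Ev (P : pi_sp Q m E1 F) := pi_emb P x0.
have bEv : bounded_op Ev.
  apply: (@lipschitz_bounded_op _ _ _ _ (`|x0| ^+ m)) => [||P]; first exact: exprn_ge0.
  - by move=> a P P'; rewrite /Ev pi_emb_lin.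
  - by rewrite mulrC pi_emb_norm_le.
have := oi_ideal hE (pi_banach hF1 hE) (pi_banach hE1 hF) hF bJ S_RB_A bEv.
suff -> : Ev \o S_RB \o J = Rop by [].
by apply: funext => e; rewrite /= /Ev S_RBE /= JE /= psiB expr1n scale1r.
Qed.

Lemma oi_mem_delta : bounded_op Rop -> (exists x, Rop x != 0) -> strongly_finrank Q ->
  forall (G1 G2 : normedModType K) (phi1 : G1 -> F1 -> K^o) (phi2 : G2 -> E1 -> K^o),
  polyspace_model m phi1 -> polyspace_model m phi2 ->
  forall Delta : G1 -> G2, (forall g, phi2 (Delta g) = phi1 g \o B) -> oi_mem A Delta.
Proof.
move=> bR R0 SF G1 G2 phi1 phi2 pm1 pm2 Delta DeltaE.
have [Rlin _] := bR.
have [e0 [phi [bphi sphi phiR]]] := exists_functional_one HB Rlin R0.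
have [philin _] := bphi.
have [Km Km_bound] := SF m.
have [J [bJ _ JE]] : exists J : G1 -> pi_sp Q m F1 E, [/\ bounded_op J,
    forall g, `|J g| <= `|Km * `|e0| | * `|g| &
    forall g, pi_emb (J g) = fun y => phi1 g y *: e0].
  apply: bounded_lift => //; [exact: pi_emb_inj | exact: pi_emb_lin | |].
    by move=> a g g' y; rewrite (pm_lin pm1) scalerDl scalerA.
  move=> g; have [|p [pE p_le]] := Km_bound F1 E hF1 hE (phi1 g) e0.
    by apply/(pm_onto pm1); exists g.
  exists p => //; have := p_le _ (pm_norm pm1 g); rewrite mulrAC => le_p.
  exact: le_norm_mulr (normr_ge0 p) le_p (normr_ge0 g).
have [T [bT _ TE]] : exists T : pi_sp Q m E1 F -> G2, [/\ bounded_op T,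
    forall P, `|T P| <= 1 * `|P| & forall P, phi2 (T P) = phi \o pi_emb P].
  apply: bounded_lift => //; [exact: (pm_inj pm2) | exact: (pm_lin pm2) | |].
    by move=> a P P' x /=; rewrite pi_emb_lin linD // linZ.
  move=> P; have [g phi2g] := (pm_onto pm2 _).1 (hpoly_comp bphi (pi_poly hE1 hF P)).
  exists g => //; rewrite mul1r; apply: sup_ball_norm_le (pm_norm pm2 g) _ => x x1.
  rewrite phi2g; apply: le_trans (pi_functional_bound hE1 hF P x bphi sphi) _.
  by rewrite mul1r ler_piMr ?exprn_ile1.
have hG1 := banach_polyspace_model hF1 SF pm1.
have hG2 := banach_polyspace_model hE1 SF pm2.
have := oi_ideal hG1 (pi_banach hF1 hE) (pi_banach hE1 hF) hG2 bJ S_RB_A bT.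
suff -> : T \o S_RB \o J = Delta by [].
apply: funext => g; apply: (pm_inj pm2); apply: funext => x.
by rewrite /= TE DeltaE /= S_RBE /= JE /= !linZ // phiR /GRing.scale /= mulr1.
Qed.

End PolynomialIdeal.

Theorem mainTheorem15 (R : realType) (k : Kind)
  (E E1 F F1 : normedModType (scalars R k))
  (hE : banach E) (hE1 : banach E1) (hF : banach F) (hF1 : banach F1)
  (m : nat)
  (Rop : E -> F) (B : E1 -> F1)
  (hR : bounded_op Rop) (hB : bounded_op B)
  (hR0 : exists x : E, Rop x != 0) (hB0 : exists x : E1, B x != 0)
  (A : opideal (scalars R k)) (Q : polyideal (scalars R k))
  (S_RB : pi_sp Q m F1 E -> pi_sp Q m E1 F)
  (hS : forall P : pi_sp Q m F1 E, pi_emb (S_RB P) = Rop \o pi_emb P \o B)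
  (hSA : oi_mem A S_RB) :
  oi_mem A Rop /\
  (strongly_finrank Q ->
   forall (G1 G2 : normedModType (scalars R k))
          (phi1 : G1 -> F1 -> (scalars R k)^o) (phi2 : G2 -> E1 -> (scalars R k)^o),
     polyspace_model m phi1 -> polyspace_model m phi2 ->
     forall Delta : G1 -> G2, (forall g : G1, phi2 (Delta g) = phi1 g \o B) ->
       oi_mem A Delta).
Proof.
have BK := @banach_scalars R k.
have HB := @norming_functionals_scalars R k.
split; first exact: (oi_mem_left_factor BK HB hE hE1 hF hF1 hS hSA hB.1 hB0).
exact: (oi_mem_delta BK HB hE hE1 hF hF1 hS hSA hR hR0).
Qed.
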